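(* For all integers $n\geq 1$ and $p\geq 0$, \begin{align*} \sum_{j=1}^n \binom{p+j}{j}\binom{2(n-j)}{n-j}\frac{4^j}{j}O_{n-j} &= -\binom{2n}{n}H_pO_n + 2^{2n-1}S_n - \sum_{j=0}^{n-1}4^{n-j-1}C_jS_{n-j-1}\\ &\quad + \frac12\sum_{k=1}^p\frac1k\left(4^n\binom{n+k}{n}(H_{n+k}-H_k) - \frac12\sum_{j=1}^n\binom{j+k-1}{j-1}4^j(H_{k+j-1}-H_k)C_{n-j}\right), \end{align*} where $S_m=\sum_{i=1}^m \frac{H_{m-i}}{i}$ for $m\geq1$ and $S_0=0$. In particular, \[ \sum_{j=1}^n\binom{2(n-j)}{n-j}\frac{4^j}{j}O_{n-j} = 2^{2n-1}S_n - \sum_{j=1}^n 4^{j-1}C_{n-j}S_{j-1}. \]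
   Context: $H_n=\sum_{j=1}^n \frac1j$ is the $n$th harmonic number ($H_0=0$), $O_n=\sum_{j=1}^n\frac{1}{2j-1}$ is the $n$th odd harmonic number ($O_0=0$), and $C_n=\frac{1}{n+1}\binom{2n}{n}$ is the $n$th Catalan number. An empty sum (e.g. $\sum_{k=1}^0$) is $0$. *)

From mathcomp Require Import all_boot all_order all_algebra.
Set Implicit Arguments. Unset Strict Implicit. Unset Printing Implicit Defensive.
Import Order.TTheory GRing.Theory Num.Theory.
Local Open Scope ring_scope.

Definition H (n : nat) : rat := \sum_(1 <= j < n.+1) (j%:R)^-1.
Definition O (n : nat) : rat := \sum_(1 <= j < n.+1) ((2 * j - 1)%N%:R)^-1.
Definition Cat (n : nat) : rat := 'C(2 * n, n)%:R / (n.+1)%:R.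
Definition Sh (m : nat) : rat := \sum_(1 <= i < m.+1) H (m - i) / i%:R.

From mathcomp Require Import all_boot all_order all_algebra.
From mathcomp Require Import ring lra zify.
Import Order.TTheory GRing.Theory Num.Theory.
Set Implicit Arguments. Unset Strict Implicit. Unset Printing Implicit Defensive.
Local Open Scope ring_scope.

(* Read sequences as coefficients of power series in x, so that [conv] is the
   product of series, and let L = -log(1 - 4x) ([logser]).  Then 2 B_m O_m
   (with B_m = binom(2m, m)) is the coefficient of L (1 - 4x)^(-1/2),
   4^m binom(m+q, m) (H_(m+q) - H_q) that of L (1 - 4x)^(-q-1), 4^m H_m that of
   L / (1 - 4x) and 4^m S_m that of L^2 / (1 - 4x); the Catalan numbers enter
   through 2x C(x) / (1 - 4x) = 1 / (1 - 4x) - (1 - 4x)^(-1/2).  Each product of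
   L with a binomial series is identified through the first-order recurrence
   (the differential equation) it satisfies.  With these identities the case
   p = 0 is a rearrangement of coefficients.  In the induction on p, Pascal's
   rule expresses the increment of the left-hand side through the coefficients
   of (1 - 4x)^(-p-1) times the series of B_m O_m, and the Catalan identity
   shows that the k = p+1 summand on the right produces the same series. *)

Section Convolution.
Variable R : comNzRingType.
Implicit Types (f g h : nat -> R) (p q : {poly R}).

Definition conv f g m : R := \sum_(i < m.+1) f i * g (m - i)%N.

Lemma conv0 f g : conv f g 0 = f 0%N * g 0%N.
Proof. by rewrite /conv big_ord1. Qed.

Lemma conv_coefM N f g m : (m < N)%N ->
  conv f g m = (\poly_(i < N) f i * \poly_(i < N) g i)`_m.
Proof.
move=> ltmN; rewrite coefM; apply: eq_bigr => -[i /= leim] _.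
by rewrite !coef_poly ifT ?ifT //; lia.
Qed.

Lemma convC f g : conv f g =1 conv g f.
Proof. by move=> m; rewrite !(@conv_coefM m.+1) // mulrC. Qed.

Lemma coefM_take_poly N p q m : (m < N)%N -> (p * take_poly N q)`_m = (p * q)`_m.
Proof.
move=> ltmN; rewrite !coefM; apply: eq_bigr => -[i /= leim] _.
by rewrite coef_take_poly ifT //; lia.
Qed.

Lemma poly_conv N f g :
  \poly_(i < N) conv f g i = take_poly N (\poly_(i < N) f i * \poly_(i < N) g i).
Proof.
apply/polyP => m; rewrite coef_poly coef_take_poly.
by case: ifP => // /conv_coefM ->.
Qed.

Lemma convA f g h : conv f (conv g h) =1 conv (conv f g) h.
Proof.
move=> m; rewrite !(@conv_coefM m.+1) // !poly_conv.
rewrite (@coefM_take_poly m.+1) // [in RHS]mulrC (@coefM_take_poly m.+1) //.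
by rewrite mulrA mulrC.
Qed.

Lemma eq_conv f f' g g' : f =1 f' -> g =1 g' -> conv f g =1 conv f' g'.
Proof. by move=> eqf eqg m; apply: eq_bigr => i _; rewrite eqf eqg. Qed.

Lemma convZr a f g m : conv f (fun i => a * g i) m = a * conv f g m.
Proof. by rewrite /conv mulr_sumr; apply: eq_bigr => i _; rewrite mulrCA. Qed.

Lemma convBr f g h m : conv f (fun i => g i - h i) m = conv f g m - conv f h m.
Proof. by rewrite /conv -sumrB; apply: eq_bigr => i _; rewrite mulrBr. Qed.

Lemma conv_shiftr f g m :
  conv f (fun i => if i is i'.+1 then g i' else 0) m.+1 = conv f g m.
Proof.
rewrite /conv big_ord_recr /= subnn mulr0 addr0.
by apply: eq_bigr => -[i /= ltim] _; rewrite subSn.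
Qed.

End Convolution.

Lemma natrS_neq0 (R : numDomainType) n : (n.+1%:R : R) != 0.
Proof. by rewrite pnatr_eq0. Qed.

Lemma eq_first_order_rec (R : numDomainType) (u v a b : nat -> R) :
  u 0%N = v 0%N ->
  (forall m, m.+1%:R * u m.+1 = a m * u m + b m) ->
  (forall m, m.+1%:R * v m.+1 = a m * v m + b m) -> u =1 v.
Proof.
move=> eq0 recu recv; elim=> // m IHm.
by apply: (mulfI (natrS_neq0 R m)); rewrite recu recv IHm.
Qed.

Section LogSeries.
Variable R : numFieldType.

Definition logser m : R := 4%:R ^+ m / m%:R.

Lemma logser0 : logser 0 = 0.
Proof. by rewrite /logser invr0 mulr0. Qed.

Lemma natr_mul_logser m : m%:R * logser m = 4%:R ^+ m - (m == 0)%:R.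
Proof.
case: m => [|m]; first by rewrite logser0 mulr0 expr0 subrr.
by rewrite subr0 mulrC mulfVK ?natrS_neq0.
Qed.

(* (L w)' = L' w + L w', where L' = 4 / (1 - 4x) and (1 - 4x) w' = 4 a w. *)
Lemma conv_logser_rec (a : R) (w : nat -> R) :
  (forall i, i.+1%:R * w i.+1 = 4%:R * (i%:R + a) * w i) ->
  forall m, m.+1%:R * conv logser w m.+1 = 4%:R * (m%:R + a) * conv logser w m + 4%:R * w m.
Proof.
move=> recw m; set P := \sum_(i < m.+1) 4%:R ^+ i * w (m - i)%N.
have -> : m.+1%:R * conv logser w m.+1 =
    \sum_(i < m.+2) (i%:R * logser i) * w (m.+1 - i)%N
  + \sum_(i < m.+2) logser i * ((m.+1 - i)%N%:R * w (m.+1 - i)%N).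
  rewrite /conv mulr_sumr -big_split; apply: eq_bigr => -[i /= ltim] _.
  have -> : m.+1%:R = i%:R + (m.+1 - i)%N%:R :> R by rewrite -natrD subnKC.
  ring.
have -> : \sum_(i < m.+2) (i%:R * logser i) * w (m.+1 - i)%N = 4%:R * P.
  rewrite big_ord_recl mul0r mul0r add0r mulr_sumr; apply: eq_bigr => i _.
  by rewrite natr_mul_logser subr0 exprS subSS mulrA.
have -> : \sum_(i < m.+2) logser i * ((m.+1 - i)%N%:R * w (m.+1 - i)%N)
    = \sum_(i < m.+1) (4%:R * (m%:R + a) * (logser i * w (m - i)%N)
        - 4%:R * (4%:R ^+ i * w (m - i)%N) + 4%:R * ((i == 0 :> nat)%:R * w (m - i)%N)).
  rewrite big_ord_recr /= subnn mul0r mulr0 addr0; apply: eq_bigr => -[i /= leim] _.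
  rewrite subSn // recw natrB // -[4%:R ^+ i](subrK (i == 0)%:R) -natr_mul_logser.
  ring.
have delta0 : \sum_(i < m.+1) (i == 0 :> nat)%:R * w (m - i)%N = w m.
  by rewrite big_ord_recl subn0 mul1r big1 ?addr0 // => i _; rewrite mul0r.
by rewrite !big_split /= sumrN -!mulr_sumr delta0 -/P /conv; ring.
Qed.

End LogSeries.

Arguments logser {R} m.

Lemma mul_bin_central n :
  (n.+1 * 'C(2 * n.+1, n.+1) = 2 * (2 * n).+1 * 'C(2 * n, n))%N.
Proof.
have sym : 'C((2 * n).+1, n) = 'C((2 * n).+1, n.+1).
  by rewrite -bin_sub; [congr 'C(_, _) | ]; lia.
have := mul_bin_diag (2 * n).+1 n; rewrite /= => diag.
rewrite (_ : 2 * n.+1 = (2 * n).+2)%N ?binS ?sym; last lia.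
by rewrite addnn -mul2n mulnCA -diag mulnA.
Qed.

Lemma sum_bin_diag p m : (\sum_(i < m.+1) 'C(i + p, i) = 'C(m + p.+1, m))%N.
Proof.
elim: m => [|m IHm]; first by rewrite big_ord1 !bin0.
by rewrite big_ord_recr /= IHm addSnnS addSn binS addnC.
Qed.

Lemma H0 : H 0 = 0.
Proof. by rewrite /H big_geq. Qed.

Lemma HS n : H n.+1 = H n + n.+1%:R^-1.
Proof. by rewrite /H big_nat_recr. Qed.

Lemma O0 : O 0 = 0.
Proof. by rewrite /O big_geq. Qed.

Lemma OS n : O n.+1 = O n + (2 * n).+1%:R^-1.
Proof. by rewrite /O big_nat_recr //=; congr (_ + _%:R^-1); lia. Qed.

Definition pow4 m : rat := 4%:R ^+ m.
Definition cbinom m : rat := 'C(2 * m, m)%:R.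
Definition negbin p m : rat := 4%:R ^+ m * 'C(m + p, m)%:R.
Definition cbinomO m : rat := cbinom m * O m.
Definition negbinH q m : rat := negbin q m * (H (m + q) - H q).
Definition pow4Sh m : rat := pow4 m * Sh m.

Lemma cbinomS m : m.+1%:R * cbinom m.+1 = 4%:R * (m%:R + 2%:R^-1) * cbinom m.
Proof. by rewrite /cbinom -natrM mul_bin_central -addn1 !(natrM, natrD); field. Qed.

Lemma negbinS p m : m.+1%:R * negbin p m.+1 = 4%:R * (m%:R + p.+1%:R) * negbin p m.
Proof.
have := mul_bin_diag (m + p).+1 m; rewrite /= => /(congr1 (GRing.natmul (1 : rat))).
rewrite !natrM /negbin addSn exprS -addnS natrD => diag.
by rewrite mulrCA -diag; ring.
Qed.

Lemma negbin0 : negbin 0 =1 pow4.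
Proof. by move=> m; rewrite /negbin addn0 binn mulr1. Qed.

Lemma conv_pow4S f m : conv pow4 f m.+1 = f m.+1 + 4%:R * conv pow4 f m.
Proof.
rewrite /conv big_ord_recl /pow4 expr0 mul1r subn0 mulr_sumr; congr (_ + _).
by apply: eq_bigr => i _; rewrite lift0 subSS exprS mulrA.
Qed.

Lemma conv_logser_cbinom m : conv logser cbinom m = 2%:R * cbinomO m.
Proof.
symmetry; move: m; apply: (@eq_first_order_rec _ _ _
  (fun m => 4%:R * (m%:R + 2%:R^-1)) (fun m => 4%:R * cbinom m)).
- by rewrite conv0 logser0 /cbinomO O0 !mul0r !mulr0.
- move=> m; rewrite /cbinomO OS.
  transitivity (2%:R * (m.+1%:R * cbinom m.+1) * (O m + (2 * m).+1%:R^-1)); first ring.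
  rewrite cbinomS -[(2 * m).+1]addn1 natrD natrM; field.
  by rewrite -natrM natr1 natrS_neq0.
- exact/conv_logser_rec/cbinomS.
Qed.

Lemma conv_logser_negbin q : conv logser (negbin q) =1 negbinH q.
Proof.
apply: fsym; apply: (@eq_first_order_rec _ _ _
  (fun m => 4%:R * (m%:R + q.+1%:R)) (fun m => 4%:R * negbin q m)).
- by rewrite conv0 logser0 mul0r /negbinH add0n subrr mulr0.
- move=> m; rewrite /negbinH mulrA negbinS addSn HS -addnS natrD; field.
  by rewrite addrCA -natrD nat1r natrS_neq0.
- exact/conv_logser_rec/negbinS.
Qed.

Lemma conv_logser_pow4 m : conv logser pow4 m = pow4 m * H m.
Proof.
by rewrite -(eq_conv (frefl _) negbin0) conv_logser_negbin /negbinH negbin0 H0 addn0 subr0.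
Qed.

Lemma conv_logser_conv_logser_pow4 : conv logser (conv logser pow4) =1 pow4Sh.
Proof.
move=> m; rewrite (eq_conv (frefl _) conv_logser_pow4) /conv big_ord_recl logser0 mul0r add0r.
rewrite /pow4Sh /Sh big_add1 big_mkord mulr_sumr; apply: eq_bigr => i _.
rewrite lift0 /logser /pow4.
have -> : 4%:R ^+ m = 4%:R ^+ i.+1 * 4%:R ^+ (m - i.+1) :> rat.
  by rewrite -exprD subnKC.
ring.
Qed.

Lemma conv_negbin_pow4 p : conv (negbin p) pow4 =1 negbin p.+1.
Proof.
move=> m; rewrite /conv /negbin -sum_bin_diag natr_sum mulr_sumr.
by apply: eq_bigr => -[i /= leim] _; rewrite /pow4 mulrAC -exprD subnKC.
Qed.

Lemma conv_pow4_Cat m : 2%:R * conv pow4 Cat m = pow4 m.+1 - cbinom m.+1.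
Proof.
elim: m => [|m IHm].
  by rewrite conv0 /pow4 /Cat /cbinom /= expr0 expr1 bin0 (_ : 'C(2, 1) = 2%N) //; field.
rewrite conv_pow4S mulrDr (mulrCA 2%:R 4%:R) IHm.
have -> : cbinom m.+2 = 4%:R * (m.+1%:R + 2%:R^-1) * cbinom m.+1 / m.+2%:R.
  by rewrite -cbinomS mulrC mulKf ?natrS_neq0.
rewrite /Cat -/(cbinom m.+1) /pow4 -[m.+2%:R]natr1 -[m.+1%:R]natr1.
by rewrite !exprS; field; rewrite !natr1 natrS_neq0.
Qed.

Lemma conv_conv_pow4_Cat z n :
  2%:R * conv z (conv pow4 Cat) n = conv z pow4 n.+1 - conv z cbinom n.+1.
Proof.
rewrite -convZr -convBr -conv_shiftr; apply: eq_conv => // -[|i] /=.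
  by rewrite /pow4 /cbinom expr0 bin0 subrr.
exact: conv_pow4_Cat.
Qed.

Lemma cbinomOE m : cbinomO m = 2%:R^-1 * conv logser cbinom m.
Proof. by rewrite conv_logser_cbinom mulKf ?natrS_neq0. Qed.

Lemma conv_logser_cbinomO n :
  conv logser cbinomO n.+1 = 2%:R^-1 * pow4Sh n.+1 - conv pow4Sh Cat n.
Proof.
have pow4ShE : pow4Sh =1 conv (conv logser logser) pow4.
  by move=> m; rewrite -convA conv_logser_conv_logser_pow4.
have := conv_conv_pow4_Cat (conv logser logser) n.
rewrite convA -(eq_conv pow4ShE (frefl Cat)) -pow4ShE -[conv _ cbinom _]convA => catE.
rewrite (eq_conv (frefl _) cbinomOE) convZr; lra.
Qed.

Lemma negbinH_conv_Cat p n : negbinH p.+1 n.+1 =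
  2%:R * conv (negbinH p.+1) Cat n + 2%:R * conv (negbin p) cbinomO n.+1.
Proof.
set z := conv logser (negbin p).
have negbinHE : negbinH p.+1 =1 conv z pow4.
  by move=> m; rewrite -convA (eq_conv (frefl _) (conv_negbin_pow4 p)) conv_logser_negbin.
have := conv_conv_pow4_Cat z n.
rewrite convA -(eq_conv negbinHE (frefl Cat)) -negbinHE.
have -> : conv z cbinom n.+1 = 2%:R * conv (negbin p) cbinomO n.+1.
  rewrite (eq_conv (convC _ _) (frefl _)) -convA -convZr.
  exact/eq_conv/conv_logser_cbinom.
lra.
Qed.

Lemma sum_logser_cbinomO n :
  \sum_(1 <= j < n.+1) 'C(2 * (n - j), n - j)%:R * (4%:R ^+ j / j%:R) * O (n - j)
  = conv logser cbinomO n.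
Proof.
rewrite /conv big_ord_recl logser0 mul0r add0r big_add1 big_mkord.
by apply: eq_bigr => i _; rewrite lift0 /cbinomO /cbinom /logser mulrAC mulrC.
Qed.

Lemma sum_Cat_pow4Sh n :
  \sum_(0 <= j < n.+1) 4%:R ^+ (n.+1 - j - 1) * Cat j * Sh (n.+1 - j - 1)
  = conv Cat pow4Sh n.
Proof.
rewrite big_mkord; apply: eq_bigr => i _.
by rewrite -subnDA addn1 subSS /pow4Sh /pow4 mulrAC mulrC.
Qed.

Lemma sum_pow4Sh_Cat n :
  \sum_(1 <= j < n.+2) 4%:R ^+ (j - 1) * Cat (n.+1 - j) * Sh (j - 1)
  = conv pow4Sh Cat n.
Proof.
rewrite big_add1 big_mkord; apply: eq_bigr => i _.
by rewrite subn1 subSS /pow4Sh /pow4 mulrAC.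
Qed.

Lemma sum_negbinH_Cat k n :
  \sum_(1 <= j < n.+2)
    'C(j + k - 1, j - 1)%:R * 4%:R ^+ j * (H (k + j - 1) - H k) * Cat (n.+1 - j)
  = 4%:R * conv (negbinH k) Cat n.
Proof.
rewrite big_add1 big_mkord mulr_sumr; apply: eq_bigr => i _.
rewrite addSn addnS !subn1 /= subSS (addnC k) /negbinH /negbin exprS; ring.
Qed.

Lemma bin_mul_logser p j :
  'C(p + j.+1, j)%:R * logser j.+1 = negbin p j.+1 / p.+1%:R.
Proof.
have := mul_bin_left (p + j.+1) j.
rewrite (_ : p + j.+1 - j = p.+1)%N; last lia.
move=> /(congr1 (GRing.natmul (1 : rat))); rewrite !natrM => binE.
have -> : 'C(p + j.+1, j)%:R = j.+1%:R * 'C(p + j.+1, j.+1)%:R / p.+1%:R :> rat.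
  by rewrite binE mulrC mulKf ?natrS_neq0.
by rewrite /logser /negbin (addnC j.+1); field; rewrite !nat1r !natrS_neq0.
Qed.

Lemma sum_binomS p n :
  \sum_(1 <= j < n.+1)
      'C(p.+1 + j, j)%:R * 'C(2 * (n - j), n - j)%:R * (4%:R ^+ j / j%:R) * O (n - j)
  = \sum_(1 <= j < n.+1)
      'C(p + j, j)%:R * 'C(2 * (n - j), n - j)%:R * (4%:R ^+ j / j%:R) * O (n - j)
    + (conv (negbin p) cbinomO n - cbinomO n) / p.+1%:R.
Proof.
have negbin_p0 : negbin p 0 = 1 by rewrite /negbin expr0 bin0 mulr1.
rewrite /conv big_ord_recl negbin_p0 subn0 mul1r [cbinomO n + _]addrC addrK.
rewrite !big_add1 !big_mkord mulr_suml -big_split; apply: eq_bigr => i _.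
rewrite lift0 addSn binS natrD !mulrDl; congr (_ + _).
by rewrite (mulrAC _ _ (_ / _)) bin_mul_logser /cbinomO /cbinom; ring.
Qed.

Lemma exp2_double_pred n : 2%:R ^+ (2 * n.+1 - 1) = 2%:R^-1 * pow4 n.+1 :> rat.
Proof.
rewrite (_ : 2 * n.+1 - 1 = (2 * n).+1)%N; last lia.
by rewrite /pow4 exprS exprM -natrX [4%:R ^+ _]exprS; field.
Qed.

Theorem theorem7 :
  (forall n p : nat, (1 <= n)%N ->
    \sum_(1 <= j < n.+1)
        'C(p + j, j)%:R * 'C(2 * (n - j), n - j)%:R * (4%:R ^+ j / j%:R) * O (n - j)
    = - ('C(2 * n, n)%:R * H p * O n) + 2%:R ^+ (2 * n - 1) * Sh n
      - \sum_(0 <= j < n) 4%:R ^+ (n - j - 1) * Cat j * Sh (n - j - 1)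
      + 2%:R^-1 * \sum_(1 <= k < p.+1) (k%:R)^-1 *
          (4%:R ^+ n * 'C(n + k, n)%:R * (H (n + k) - H k)
           - 2%:R^-1 * \sum_(1 <= j < n.+1)
               'C(j + k - 1, j - 1)%:R * 4%:R ^+ j * (H (k + j - 1) - H k) * Cat (n - j)))
  /\
  (forall n : nat, (1 <= n)%N ->
    \sum_(1 <= j < n.+1) 'C(2 * (n - j), n - j)%:R * (4%:R ^+ j / j%:R) * O (n - j)
    = 2%:R ^+ (2 * n - 1) * Sh n
      - \sum_(1 <= j < n.+1) 4%:R ^+ (j - 1) * Cat (n - j) * Sh (j - 1) :> rat).
Proof.
split=> -[|n] //; last first.
  by rewrite sum_logser_cbinomO sum_pow4Sh_Cat conv_logser_cbinomO exp2_double_pred mulrA.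
move=> p _; elim: p => [|p IHp].
  rewrite H0 [X in 2%:R^-1 * X]big_geq //.
  under eq_bigr do rewrite add0n binn mul1r.
  rewrite sum_logser_cbinomO sum_Cat_pow4Sh conv_logser_cbinomO exp2_double_pred convC.
  by rewrite /pow4Sh; ring.
rewrite sum_binomS IHp HS (big_nat_recr p.+1) //= sum_negbinH_Cat -/(negbinH p.+1 n.+1).
by rewrite negbinH_conv_Cat /cbinomO /cbinom; field; rewrite nat1r natrS_neq0.
Qed.
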